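(* For all integers $0\le s\le r$, $$\sum_{\rho=s}^{r}\mathcal G^r_\rho\,a^{(2\rho)}_s=(2r)!\binom rs,\qquad \sum_{\rho=s}^{r}\mathcal G^r_\rho\,a^{(2\rho+1)}_s=(2r+1)!\binom rs .$$
   Context: The integers $\mathcal G^r_\rho$ ($0\le\rho\le r$) are defined by $\mathcal G^0_0=1$, $\mathcal G^r_{-1}=\mathcal G^r_{r+1}=0$, and $\mathcal G^r_\rho=(2r-1)^2\mathcal G^{r-1}_\rho+\mathcal G^{r-1}_{\rho-1}$ for $r\ge1$. Stern's coefficients $a^{(n)}_k$ are the unique numbers such that, for all integers $\rho\ge0$ and real $x$, $\frac{d^{2\rho}}{dx^{2\rho}}\operatorname{sech}x=(-1)^\rho\operatorname{sech}x\sum_{k=0}^{\rho}(-1)^k a^{(2\rho)}_k\tanh^{2k}x$ and $\frac{d^{2\rho+1}}{dx^{2\rho+1}}\operatorname{sech}x=(-1)^{\rho+1}\operatorname{sech}x\,\tanh x\sum_{k=0}^{\rho}(-1)^k a^{(2\rho+1)}_k\tanh^{2k}x$. *)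

From Stdlib Require Import Reals.
Open Scope R_scope.

(* G^0_0 = 1, G^0_rho = 0 otherwise
   (this encodes G^r_{r+1} = 0), and for r >= 1 (written r = S r'):
   G^{r}_rho = (2r-1)^2 G^{r-1}_rho + G^{r-1}_{rho-1}, with G^{r-1}_{-1} = 0. *)
Fixpoint G (r rho : nat) : nat :=
  match r with
  | O => match rho with O => 1%nat | S _ => 0%nat end
  | S r' => match rho with
            | O => ((2 * r' + 1) * (2 * r' + 1) * G r' O)%nat
            | S rho' => ((2 * r' + 1) * (2 * r' + 1) * G r' (S rho') + G r' rho')%nat
            end
  end.

Definition sech (x : R) : R := / cosh x.

Fixpoint nth_deriv (n : nat) (f g : R -> R) : Prop :=
  match n with
  | O => forall x, g x = f x
  | S m => exists h : R -> R, nth_deriv m f h /\ forall x, derivable_pt_lim h x (g x)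
  end.

(* a : nat -> nat -> R satisfies Stern's defining identities: a n k = a^{(n)}_k. *)
Definition stern_coeffs (a : nat -> nat -> R) : Prop :=
  forall rho : nat,
    nth_deriv (2 * rho) sech
      (fun x => (-1) ^ rho * sech x *
         sum_f_R0 (fun k => (-1) ^ k * a (2 * rho)%nat k * tanh x ^ (2 * k)) rho)
    /\
    nth_deriv (2 * rho + 1) sech
      (fun x => (-1) ^ (rho + 1) * sech x * tanh x *
         sum_f_R0 (fun k => (-1) ^ k * a (2 * rho + 1)%nat k * tanh x ^ (2 * k)) rho).

(* For a polynomial p write  f_p x = sech x * p(tanh x).  Since sech' = -sech tanh
   and tanh' = 1 - tanh^2, we have  (f_p)' = f_(D p)  with
       D p = - X p + (1 - X^2) p',
   hence  sech^(n) = f_(p_n)  for  p_n = D^n 1  ([sech_poly n]).  As tanh maps R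
   onto (-1, 1), a polynomial is determined by its composite with tanh, so
   Stern's identities say exactly that p_(2 rho) and p_(2 rho + 1) are the
   (signed) even polynomials built from a^(2 rho)_k and a^(2 rho + 1)_k.

   With W = 1 - X^2,
       D^2 (W^r) = (2r+1)^2 W^r - (2r+1)(2r+2) W^(r+1),
   so the recursion defining G turns  E_r = sum_rho (-1)^rho G^r_rho p_(2 rho)
   into  E_r = (2r)! W^r,  and then  D E_r = -(2r+1)! X W^r.  Expanding W^r by
   the binomial theorem and reading off the coefficient of X^(2s) in the first
   equality, and of X^(2s+1) in the second, gives the two identities. *)
From Stdlib Require Import Reals Lra FunctionalExtensionality.
Open Scope R_scope.

Lemma cosh_pos x : 0 < cosh x.
Proof. unfold cosh. pose proof (exp_pos x); pose proof (exp_pos (- x)); lra. Qed.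

Lemma sech_neq0 x : sech x <> 0.
Proof. apply Rinv_neq_0_compat, Rgt_not_eq, cosh_pos. Qed.

Lemma cosh2_sub_sinh2 x : cosh x ^ 2 - sinh x ^ 2 = 1.
Proof.
  unfold cosh, sinh.
  assert (H : exp x * exp (- x) = 1) by (rewrite <- exp_plus, Rplus_opp_r; apply exp_0).
  nra.
Qed.

Lemma derivable_pt_lim_sech x : derivable_pt_lim sech x (- (sech x * tanh x)).
Proof.
  pose proof (cosh_pos x) as Hc.
  replace (- (sech x * tanh x)) with ((0 * cosh x - sinh x * 1) / Rsqr (cosh x))
    by (unfold sech, tanh, Rsqr; field; lra).
  replace sech with (fun y => 1 / cosh y)
    by (apply functional_extensionality; intro y; unfold sech, Rdiv; ring).
  apply (derivable_pt_lim_div (fun _ => 1) cosh);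
    [apply derivable_pt_lim_const | apply derivable_pt_lim_cosh | lra].
Qed.

Lemma derivable_pt_lim_tanh x : derivable_pt_lim tanh x (1 - tanh x ^ 2).
Proof.
  pose proof (cosh_pos x) as Hc; pose proof (cosh2_sub_sinh2 x) as Hp.
  replace (1 - tanh x ^ 2) with ((cosh x * cosh x - sinh x * sinh x) / Rsqr (cosh x))
    by (unfold tanh, Rsqr; field_simplify_eq; [nra | lra]).
  apply derivable_pt_lim_div; [apply derivable_pt_lim_sinh
                              | apply derivable_pt_lim_cosh | lra].
Qed.

(* tanh maps R onto (-1, 1): the preimage of y is ln((1+y)/(1-y)) / 2. *)
Lemma tanh_onto y : -1 < y < 1 -> exists x, tanh x = y.
Proof.
  intros Hy.
  set (z := ln ((1 + y) / (1 - y)) / 2).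
  assert (Hz : exp z * exp z * (1 - y) = 1 + y).
  { rewrite <- exp_plus.
    replace (z + z) with (ln ((1 + y) / (1 - y))) by (unfold z; field).
    rewrite exp_ln by (apply Rdiv_lt_0_compat; lra). field; lra. }
  exists z. pose proof (exp_pos z).
  unfold tanh, sinh, cosh. rewrite exp_Ropp.
  apply (Rmult_eq_reg_r (exp z * exp z + 1)); [field_simplify; nra | nra].
Qed.

Lemma nth_deriv_unique {n f g1 g2} :
  nth_deriv n f g1 -> nth_deriv n f g2 -> forall x, g1 x = g2 x.
Proof.
  revert g1 g2; induction n as [|n IH]; simpl; intros g1 g2 H1 H2 x.
  - rewrite H1, H2; reflexivity.
  - destruct H1 as [h1 [Hh1 D1]], H2 as [h2 [Hh2 D2]].
    assert (E : h1 = h2) by (apply functional_extensionality; apply IH; assumption).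
    subst h2; exact (uniqueness_limite h1 x _ _ (D1 x) (D2 x)).
Qed.

From HB Require Import structures.
From mathcomp Require Import all_boot all_order all_algebra.
From mathcomp Require Import Rstruct ring.
Import Order.TTheory GRing.Theory Num.Theory.
Set Implicit Arguments.
Local Open Scope ring_scope.

Section SechOperator.
Context {K : comNzRingType}.
Implicit Types (p q : {poly K}).

(* W(tanh x) = sech x ^ 2; the closed forms below are multiples of powers of W. *)
Definition W : {poly K} := 1 - 'X ^+ 2.

(* The operator D with (sech * p(tanh))' = sech * (D p)(tanh). *)
Definition Dsech p : {poly K} := - ('X * p) + W * p^`().

Definition sech_poly (n : nat) : {poly K} := iter n Dsech 1.

Lemma sech_poly_succ n : sech_poly n.+1 = Dsech (sech_poly n).
Proof. by []. Qed.

Fact Dsech_is_semilinear : semilinear Dsech.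
Proof. by split=> [c p | p q]; rewrite /Dsech (derivZ, derivD) -?mul_polyC; ring. Qed.

HB.instance Definition _ :=
  GRing.isSemilinear.Build K {poly K} {poly K} _ Dsech Dsech_is_semilinear.

Lemma deriv_W : W^`() = - (2%:R * 'X).
Proof. by rewrite /W derivB -(polyC1 K) derivC derivXn sub0r mulr_natl. Qed.

Lemma W_mul_deriv_expW r : W * (W ^+ r)^`() = - ((2 * r)%:R * ('X * W ^+ r)).
Proof.
  case: r => [|r]; first by rewrite expr0 -(polyC1 K) derivC mulr0 mul0r oppr0.
  rewrite deriv_exp deriv_W /= -mulr_natr exprS natrM.
  ring.
Qed.

Lemma Dsech_expW r : Dsech (W ^+ r) = - ((2 * r + 1)%:R * ('X * W ^+ r)).
Proof. rewrite {1}/Dsech W_mul_deriv_expW natrD; ring. Qed.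

Lemma Dsech_X_expW r :
  Dsech ('X * W ^+ r) = W ^+ r.+1 - (2 * r + 1)%:R * ('X ^+ 2 * W ^+ r).
Proof.
  rewrite {1}/Dsech derivM derivX mulrDr [W * ('X * _)]mulrCA W_mul_deriv_expW.
  rewrite natrD exprS; ring.
Qed.

(* D^2 W^r = (2r+1)^2 W^r - (2r+1)(2r+2) W^(r+1), mirroring the recursion of G. *)
Lemma Dsech2_expW r :
  Dsech (Dsech (W ^+ r))
    = ((2 * r + 1) ^ 2)%:R * W ^+ r - ((2 * r + 1) * (2 * r + 2))%:R * W ^+ r.+1.
Proof.
  have X2_expW : 'X ^+ 2 * W ^+ r = W ^+ r - W ^+ r.+1 by rewrite [W ^+ r.+1]exprS /W; ring.
  rewrite Dsech_expW raddfN mulr_natl raddfMn /= Dsech_X_expW -mulr_natl X2_expW.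
  rewrite !(natrM, natrD, natrX); ring.
Qed.

End SechOperator.

Lemma G_succ r rho :
  G r.+1 rho.+1 = ((2 * r + 1) ^ 2 * G r rho.+1 + G r rho)%N.
Proof. by []. Qed.

Lemma G_out r rho : (r < rho)%N -> G r rho = 0%N.
Proof.
  elim: r rho => [|r IH] [|rho] // lt_r_rho.
  by rewrite G_succ (IH rho lt_r_rho) (IH rho.+1 (ltnW lt_r_rho)) muln0.
Qed.

Section GCombination.
Context {K : comNzRingType}.

Definition G_weight r rho : K := (G r rho)%:R * (-1) ^+ rho.

Definition G_even_sum r : {poly K} :=
  \sum_(rho < r.+1) G_weight r rho *: sech_poly (2 * rho).

Lemma G_weight_succ r rho :
  G_weight r.+1 rho.+1 = ((2 * r + 1) ^ 2)%:R * G_weight r rho.+1 - G_weight r rho.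
Proof. rewrite /G_weight G_succ natrD natrM exprS; ring. Qed.

Lemma G_even_sum_succ r :
  G_even_sum r.+1 = ((2 * r + 1) ^ 2)%:R *: G_even_sum r - Dsech (Dsech (G_even_sum r)).
Proof.
  set k : K := ((2 * r + 1) ^ 2)%:R.
  have extended : G_even_sum r = \sum_(rho < r.+2) G_weight r rho *: sech_poly (2 * rho).
    by rewrite big_ord_recr /= {2}/G_weight G_out // mul0r scale0r addr0.
  have D2_sum : Dsech (Dsech (G_even_sum r))
      = \sum_(rho < r.+1) G_weight r rho *: sech_poly (2 * rho.+1).
    rewrite /G_even_sum !linear_sum; apply: eq_bigr => rho _.
    by rewrite !linearZ mulnS.
  have weight0 : G_weight r.+1 0 = k * G_weight r 0.
    by rewrite /G_weight /= natrM mulrA.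
  rewrite D2_sum extended /G_even_sum big_ord_recl [X in k *: X]big_ord_recl.
  rewrite weight0 scalerDr scaler_sumr scalerA -addrA -sumrB; congr (_ + _).
  apply: eq_bigr => rho _.
  by rewrite lift0 G_weight_succ scalerBl scalerA.
Qed.

Lemma G_even_sum_closed r : G_even_sum r = (2 * r)`!%:R *: W ^+ r.
Proof.
  elim: r => [|r IH]; first by rewrite /G_even_sum big_ord1 /G_weight /= mulr1 !scale1r.
  rewrite G_even_sum_succ IH !linearZ /= Dsech2_expW.
  have -> : (2 * r.+1)`! = ((2 * r)`! * ((2 * r + 1) * (2 * r + 2)))%N.
    by rewrite mulnS add2n !factS mulnCA mulnA mulnC addn1 addn2.
  rewrite -!mul_polyC !polyC_natr natrM; ring.
Qed.

Lemma Dsech_G_even_sum r : Dsech (G_even_sum r) = - ((2 * r + 1)`!%:R *: ('X * W ^+ r)).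
Proof.
  rewrite G_even_sum_closed linearZ /= Dsech_expW addn1 factS.
  rewrite -!mul_polyC !polyC_natr natrM; ring.
Qed.

End GCombination.

Section EvenPolynomials.
Context {K : comNzRingType}.

Definition evenp (c : nat -> K) n : {poly K} := \sum_(k < n.+1) c k *: 'X^(2 * k).

Lemma coef_evenp c n j : (evenp c n)`_(2 * j) = if (j <= n)%N then c j else 0.
Proof.
  rewrite coef_sumMXn.
  under eq_bigl => k do rewrite eqn_mul2l /=.
  by rewrite big_ord1_eq ltnS.
Qed.

Lemma horner_evenp c n t : (evenp c n).[t] = \sum_(k < n.+1) c k * t ^+ (2 * k).
Proof. by rewrite horner_sum; apply: eq_bigr => k _; rewrite hornerZ hornerXn. Qed.

Lemma coef_sum_evenp (g : nat -> K) (c : nat -> nat -> K) r s :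
  (\sum_(rho < r.+1) g rho *: evenp (c rho) rho)`_(2 * s)
    = \sum_(s <= rho < r.+1) g rho * c rho s.
Proof.
  rewrite coef_sum big_geq_mkord [RHS]big_mkcond; apply: eq_bigr => rho _.
  by rewrite coefZ coef_evenp; case: ifP; rewrite ?mulr0.
Qed.

Lemma expW_evenp r : W ^+ r = evenp (fun k => (-1) ^+ k * 'C(r, k)%:R) r.
Proof.
  rewrite /W exprDn /evenp; apply: eq_bigr => k _.
  rewrite expr1n mul1r [in LHS]exprNn -exprM -mul_polyC rmorphM rmorphXn /=.
  rewrite polyCN polyC1 polyC_natr.
  by rewrite -mulr_natr; ring.
Qed.

Lemma coef_sum_sign_evenp (g : nat -> K) (c : nat -> nat -> K) (m : K) r s : (s <= r)%N ->
  \sum_(rho < r.+1) g rho *: evenp (fun k => (-1) ^+ k * c rho k) rho = m *: W ^+ r ->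
  \sum_(s <= rho < r.+1) g rho * c rho s = m * 'C(r, s)%:R.
Proof.
  move=> le_sr /(congr1 (fun p : {poly K} => p`_(2 * s))).
  rewrite (coef_sum_evenp g (fun rho k => (-1) ^+ k * c rho k)) coefZ expW_evenp.
  rewrite coef_evenp le_sr => coef_eq.
  apply: (@lreg_sign _ s); rewrite mulrCA -coef_eq mulr_sumr.
  by apply: eq_bigr => rho _; rewrite mulrCA.
Qed.
End EvenPolynomials.

Lemma poly_eq_on_unit_interval {F : numFieldType} (p q : {poly F}) :
  (forall t : F, 0 <= t -> t < 1 -> p.[t] = q.[t]) -> p = q.
Proof.
  move=> Hpq; apply/eqP; rewrite -subr_eq0; apply/negPn/negP => nz_pq.
  set N := size (p - q).
  pose roots : seq F := [seq i%:R / N%:R | i <- iota 0 N].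
  have N_gt0 : (0 : F) < N%:R by rewrite ltr0n lt0n size_poly_eq0.
  have all_roots : all (root (p - q)) roots.
    apply/allP => y /mapP [i]; rewrite mem_iota add0n => /andP [_ ltiN] ->.
    rewrite /root hornerD hornerN Hpq ?subrr //.
      by rewrite divr_ge0 ?ler0n // ltW.
    by rewrite ltr_pdivrMr // mul1r ltr_nat.
  have uniq_roots : uniq roots.
    rewrite map_inj_uniq ?iota_uniq // => i j /(mulIf _) eq_ij.
    by apply/eqP; rewrite -(eqr_nat F) eq_ij // invr_eq0 gt_eqF.
  have := max_poly_roots nz_pq all_roots uniq_roots.
  by rewrite size_map size_iota ltnn.
Qed.

Lemma derivable_pt_lim_horner_tanh (p : {poly R}) x :
  derivable_pt_lim (fun y => p.[tanh y]) x ((p^`()).[tanh x] * (1 - tanh x ^+ 2)).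
Proof.
  have Dtanh : derivable_pt_lim tanh x (1 - tanh x ^+ 2).
    by rewrite -RpowE; apply: derivable_pt_lim_tanh.
  elim/poly_ind: p => [|p c IH].
  - have -> : (fun y => 0.[tanh y]) = fun=> 0 :> R.
      by apply: functional_extensionality => y; rewrite horner0.
    by rewrite deriv0 horner0 mul0r; apply: derivable_pt_lim_const.
  - have -> : (fun y => (p * 'X + c%:P).[tanh y]) = fun y => p.[tanh y] * tanh y + c.
      by apply: functional_extensionality => y; rewrite hornerMXaddC.
    have := derivable_pt_lim_plus _ _ x _ _
      (derivable_pt_lim_mult _ _ x _ _ IH Dtanh) (derivable_pt_lim_const c x).
    rewrite /plus_fct /mult_fct !RealsE addr0 derivMXaddC hornerD hornerMX.
    by congr derivable_pt_lim; ring.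
Qed.

Lemma derivable_pt_lim_sech_horner (p : {poly R}) x :
  derivable_pt_lim (fun y => sech y * p.[tanh y]) x (sech x * (Dsech p).[tanh x]).
Proof.
  have := derivable_pt_lim_mult _ _ x _ _ (derivable_pt_lim_sech x)
    (derivable_pt_lim_horner_tanh p x).
  rewrite /mult_fct /Dsech /W !RealsE hornerD hornerN !hornerM hornerX.
  rewrite hornerD hornerN hornerXn -(polyC1 R) hornerC.
  by congr derivable_pt_lim; ring.
Qed.

Lemma nth_deriv_sech_poly n : nth_deriv n sech (fun x => sech x * (sech_poly n).[tanh x]).
Proof.
  elim: n => [|n IH] /=; first by move=> x; rewrite -(polyC1 R) hornerC mulr1.
  exists (fun x => sech x * (sech_poly n).[tanh x]); split; first exact: IH.
  exact: derivable_pt_lim_sech_horner.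
Qed.

Lemma sech_poly_eq {n g} (q : {poly R}) :
  nth_deriv n sech g -> (forall x, g x = sech x * q.[tanh x]) -> sech_poly n = q.
Proof.
  move=> Dg g_q; apply: poly_eq_on_unit_interval => t t_ge0 t_lt1.
  have [x <-] : exists x, tanh x = t.
    by apply: tanh_onto; split; apply/RltP; rewrite ?(lt_le_trans (ltrN10 R)).
  have sech_nz : sech x != 0 by apply/eqP; exact: sech_neq0.
  apply: (mulfI sech_nz).
  by rewrite -g_q (nth_deriv_unique (nth_deriv_sech_poly n) Dg).
Qed.

Definition stern_even (a : nat -> nat -> R) rho : {poly R} :=
  evenp (fun k => (-1) ^+ k * a (2 * rho)%N k) rho.

Definition stern_odd (a : nat -> nat -> R) rho : {poly R} :=
  evenp (fun k => (-1) ^+ k * a (2 * rho + 1)%N k) rho.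

Lemma IZR_N1 : IZR (Zneg xH) = -1 :> R.
Proof. by []. Qed.

Lemma sech_poly_even a (Ha : stern_coeffs a) rho :
  sech_poly (2 * rho) = (-1) ^+ rho *: stern_even a rho.
Proof.
  have [Deven _] := Ha rho.
  apply: (sech_poly_eq _ Deven) => x.
  rewrite sum_f_R0E big_mkord; under eq_bigr => k _ do rewrite !RealsE IZR_N1 multE.
  by rewrite !RealsE IZR_N1 hornerZ horner_evenp [_ * sech x]mulrC -mulrA.
Qed.

Lemma sech_poly_odd a (Ha : stern_coeffs a) rho :
  sech_poly (2 * rho + 1) = (-1) ^+ rho.+1 *: ('X * stern_odd a rho).
Proof.
  have [_ Dodd] := Ha rho.
  apply: (sech_poly_eq _ Dodd) => x.
  rewrite sum_f_R0E big_mkord; under eq_bigr => k _ do rewrite !RealsE IZR_N1 multE plusE.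
  by rewrite !RealsE IZR_N1 plusE addn1 hornerZ hornerM hornerX horner_evenp
    [_ * sech x]mulrC -!mulrA.
Qed.

Lemma G_even_sum_stern a (Ha : stern_coeffs a) r :
  G_even_sum r = \sum_(rho < r.+1) (G r rho)%:R *: stern_even a rho.
Proof.
  apply: eq_bigr => rho _.
  by rewrite (sech_poly_even Ha) /G_weight -scalerA signrZK.
Qed.

Lemma Dsech_G_even_sum_stern a (Ha : stern_coeffs a) r :
  Dsech (G_even_sum r) = - ('X * \sum_(rho < r.+1) (G r rho)%:R *: stern_odd a rho).
Proof.
  rewrite linear_sum mulr_sumr -sumrN; apply: eq_bigr => rho _.
  rewrite linearZ /= -sech_poly_succ -[(2 * rho).+1]addn1 (sech_poly_odd Ha).
  by rewrite /G_weight -scalerA exprS mulN1r scaleNr scalerN signrZK scalerN scalerAr.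
Qed.

Lemma stern_even_identity a (Ha : stern_coeffs a) r s : (s <= r)%N ->
  \sum_(s <= rho < r.+1) (G r rho)%:R * a (2 * rho)%N s = (2 * r)`!%:R * 'C(r, s)%:R.
Proof.
  move=> le_sr; apply: (coef_sum_sign_evenp _ (fun rho => a (2 * rho)%N)) le_sr _.
  by rewrite -(G_even_sum_stern Ha) G_even_sum_closed.
Qed.

Lemma stern_odd_identity a (Ha : stern_coeffs a) r s : (s <= r)%N ->
  \sum_(s <= rho < r.+1) (G r rho)%:R * a (2 * rho + 1)%N s
    = (2 * r + 1)`!%:R * 'C(r, s)%:R.
Proof.
  move=> le_sr; apply: (coef_sum_sign_evenp _ (fun rho => a (2 * rho + 1)%N)) le_sr _.
  apply: (mulfI (negbT (polyX_eq0 R))); apply: oppr_inj.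
  by rewrite -(Dsech_G_even_sum_stern Ha) Dsech_G_even_sum scalerAr.
Qed.

Lemma sum_f_R0_shift (F : nat -> R) r s : (s <= r)%N ->
  sum_f_R0 (fun i => F (i + s)%N) (r - s) = \sum_(s <= rho < r.+1) F rho.
Proof. by move=> le_sr; rewrite sum_f_R0E -[in RHS](add0n s) big_addn subSn. Qed.

Lemma C_binomial r s : (s <= r)%N -> C r s = 'C(r, s)%:R.
Proof.
  move=> le_sr; rewrite /C RdivE !INRE !factE -(bin_fact le_sr) !natrM mulfK //.
  by rewrite mulf_neq0 // pnatr_eq0 -lt0n fact_gt0.
Qed.

Open Scope R_scope.

Theorem mainTheorem3 (a : nat -> nat -> R) (Ha : stern_coeffs a) (r s : nat)
    (hs : Peano.le s r) :
  sum_f_R0 (fun i => INR (G r (i + s)) * a (2 * (i + s))%nat s) (r - s)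
    = INR (Factorial.fact (2 * r)) * C r s
  /\
  sum_f_R0 (fun i => INR (G r (i + s)) * a (2 * (i + s) + 1)%nat s) (r - s)
    = INR (Factorial.fact (2 * r + 1)) * C r s.
Proof.
  have le_sr : (s <= r)%N by apply/ssrnat.leP.
  rewrite C_binomial // !INRE !factE !RmultE -(stern_even_identity Ha r s le_sr)
    -(stern_odd_identity Ha r s le_sr).
  by split; rewrite -sum_f_R0_shift //; congr sum_f_R0;
    apply: functional_extensionality => i; rewrite INRE.
Qed.
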